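(* Let $\mathcal{A}\subseteq 2^P$ be a connected access structure and let $\mathcal M=(f,sP)$ be a polymatroid realizing $\mathcal{A}$ such that $f(a)=f(s)=1$ for all $a\in P$. Then $\mathcal M$ is a matroid, and it is uniquely determined by $\mathcal{A}$: any two polymatroids satisfying these hypotheses for the same $\mathcal{A}$ coincide.
   Context: A polymatroid $(f,M)$ consists of a finite set $M$ and a function $f$ on subsets of $M$ with $f(\emptyset)=0$ that is non-negative, monotone and submodular; a matroid is an integer-valued polymatroid whose singletons have rank $0$ or $1$. An access structure on a finite set $P$ is a non-empty upward-closed $\mathcal{A}\subseteq 2^P$ with $\emptyset\notin\mathcal{A}$; members are qualified. A participant $i\in P$ is important if there is $A\subseteq P$, $A\notin\mathcal{A}$, with $A\cup\{i\}\in\mathcal{A}$; $\mathcal{A}$ is connected if every participant is important. Let $s\notin P$; juxtaposition denotes union. A polymatroid $(f,sP)$ realizes $\mathcal{A}$ if for every $A\subseteq P$: $A\in\mathcal{A}$ iff $f(sA)=f(A)$, and $A\notin\mathcal{A}$ iff $f(sA)=f(A)+f(s)$. *)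

(* Ground set sP is modelled as [option P], with [None] = s. *)
From HB Require Import structures.
From mathcomp Require Import all_boot all_order all_algebra.
Set Implicit Arguments. Unset Strict Implicit. Unset Printing Implicit Defensive.
Import Order.TTheory GRing.Theory Num.Theory.
Local Open Scope ring_scope.

Definition polymatroid (R : realFieldType) (M : finType) (f : {set M} -> R) : Prop :=
  [/\ f set0 = 0,
      (forall X : {set M}, 0 <= f X),
      (forall X Y : {set M}, X \subset Y -> f X <= f Y) &
      (forall X Y : {set M}, f (X :|: Y) + f (X :&: Y) <= f X + f Y)].

Definition matroid (R : realFieldType) (M : finType) (f : {set M} -> R) : Prop :=
  [/\ polymatroid f,
      (forall X : {set M}, exists z : int, f X = z%:~R) &
      (forall x : M, f [set x] = 0 \/ f [set x] = 1)].

Definition access_structure (P : finType) (A : {set {set P}}) : Prop :=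
  [/\ A != set0,
      (forall X Y : {set P}, X \in A -> X \subset Y -> Y \in A) &
      set0 \notin A].

Definition important (P : finType) (A : {set {set P}}) (i : P) : Prop :=
  exists X : {set P}, X \notin A /\ (i |: X) \in A.

Definition connected_as (P : finType) (A : {set {set P}}) : Prop :=
  forall i : P, important A i.

Definition liftP (P : finType) (X : {set P}) : {set option P} := Some @: X.
Definition withs (P : finType) (X : {set P}) : {set option P} := None |: liftP X.

Definition realizes (R : realFieldType) (P : finType) (f : {set option P} -> R)
    (A : {set {set P}}) : Prop :=
  forall X : {set P},
    (X \in A <-> f (withs X) = f (liftP X)) /\
    (X \notin A <-> f (withs X) = f (liftP X) + f [set None]).

(* Every marginal f(x + Y) - f(Y) lies in [0, 1]; the point is that it is 0 or 1.
   Take a fractional marginal of x at Y with |Y| minimal and put V = x + Y.  The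
   exchange identity for marginals spreads the fractional value theta to every
   element of V and forces f W = |W| for the proper subsets W of V, so that
   f W > |W| - 1 for all W included in V.  Now take a minimal qualified set Z
   meeting V with |Z \ V| least (it exists because x is important), and a minimal
   qualified Z' inside (Z + V) - v for some v in Z /\ V: Z' \ V = Z \ V, so
   f (Z + Z') > |Z + Z'| - 1, whereas submodularity at s + Z, s + Z' gives
   f (Z + Z') <= |Z + Z'| - 1.  Integer marginals make f a matroid rank function;
   for uniqueness, the midpoint of two realizing polymatroids realizes A as well,
   and the mean of two numbers in {0, 1} is in {0, 1} only when they are equal. *)

From HB Require Import structures.
From mathcomp Require Import all_boot all_order all_algebra.
From mathcomp Require Import ring lra.
From Stdlib Require Import FunctionalExtensionality.
Set Implicit Arguments. Unset Strict Implicit. Unset Printing Implicit Defensive.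
Import Order.TTheory GRing.Theory Num.Theory.
Local Open Scope ring_scope.

Lemma set_ind (T : finType) (P : {set T} -> Prop) :
  P set0 -> (forall (x : T) (X : {set T}), x \notin X -> P X -> P (x |: X)) ->
  forall X, P X.
Proof.
move=> P0 PU X; have [n] := ubnP #|X|; elim: n X => // n IH X cardX.
have [->|/set0Pn[x xX]] := eqVneq X set0; first exact: P0.
rewrite -(setD1K xX); apply: PU; first by rewrite !inE eqxx.
by apply: IH; move: cardX; rewrite (cardsD1 x) xX.
Qed.

Section Marginal.
Variables (R : realFieldType) (E : finType) (f : {set E} -> R).
Implicit Types (x y : E) (L S W X Y : {set E}).

Definition marginal x Y := f (x |: Y) - f Y.

Lemma marginal_exchange x y Y :
  marginal x Y + marginal y (x |: Y) = marginal y Y + marginal x (y |: Y).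
Proof. by rewrite /marginal setUCA; ring. Qed.

Definition zero_one_marginals :=
  forall x Y, x \notin Y -> marginal x Y = 0 \/ marginal x Y = 1.

Lemma zero_one_marginals_nat : f set0 = 0 -> zero_one_marginals ->
  forall X, exists n : nat, f X = n%:R.
Proof.
move=> f0 f01; elim/set_ind => [|x X xX [n fX]]; first by exists 0%N.
by case: (f01 x X xX); rewrite /marginal fX => fxX; [exists n | exists n.+1];
  rewrite -?natr1; lra.
Qed.

Hypothesis pf : polymatroid f.
Hypothesis f1 : forall x, f [set x] = 1.

Lemma marginal_ge0 x Y : 0 <= marginal x Y.
Proof. by case: pf => _ _ fmono _; rewrite subr_ge0 fmono ?subsetU1. Qed.

Lemma marginal_le_subset x Y Y' :
  Y \subset Y' -> x \notin Y' -> marginal x Y' <= marginal x Y.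
Proof.
case: pf => _ _ _ fsub YY' xY'; have := fsub (x |: Y) Y'.
have -> : (x |: Y) :|: Y' = x |: Y' by rewrite -setUA (setUidPr YY').
have -> : (x |: Y) :&: Y' = Y.
  by rewrite setIUl (setIidPl YY') (disjoint_setI0 _) ?set0U // disjoints1.
by rewrite /marginal; lra.
Qed.

Lemma marginal_le1 x Y : x \notin Y -> marginal x Y <= 1.
Proof.
case: pf => f0 _ _ _ xY.
by have := marginal_le_subset (sub0set Y) xY; rewrite /marginal setU0 f1 f0 subr0.
Qed.

Lemma f_setU_unit_marginals L S : [disjoint L & S] ->
  (forall r, r \in S -> 1 <= marginal r ((L :|: S) :\ r)) ->
  f (L :|: S) = f L + #|S|%:R.
Proof.
elim/set_ind: S => [|x S xS IH] LxS margS; first by rewrite setU0 cards0 addr0.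
have xL : x \notin L by rewrite (disjointFl LxS) // setU11.
have xLS : x \notin L :|: S by rewrite in_setU negb_or xL.
have LS : [disjoint L & S] by apply: disjointWr LxS; apply: subsetU1.
have fLS : f (L :|: S) = f L + #|S|%:R.
  apply: IH => // r rS; apply: le_trans (margS r _) _; first by rewrite !inE rS orbT.
  apply: marginal_le_subset; last by rewrite !inE eqxx.
  by apply/setSD/setUS/subsetU1.
have mx : marginal x (L :|: S) = 1.
  apply/le_anti; rewrite marginal_le1 //=.
  by have := margS x (setU11 x S); rewrite setUCA setU1K.
move: mx; rewrite /marginal setUCA cardsU1 xS add1n -natr1 fLS; lra.
Qed.

Lemma f_eq_card W : (forall r, r \in W -> 1 <= marginal r (W :\ r)) -> f W = #|W|%:R.
Proof.
case: pf => f0 _ _ _ margW.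
have := @f_setU_unit_marginals set0 W; rewrite set0U f0 add0r; apply=> //.
by rewrite -setI_eq0 set0I.
Qed.

End Marginal.

Section Realization.
Variables (R : realFieldType) (E : finType) (f : {set E} -> R).
Variables (s : E) (Q : {set E} -> bool).
Implicit Types (b c v x y : E) (L V W X Y Z : {set E}).

Hypothesis pf : polymatroid f.
Hypothesis f1 : forall x, f [set x] = 1.
Hypothesis Q_up : forall X Y, X \subset Y -> Q X -> Q Y.
Hypothesis f_setU1s : forall X, s \notin X -> f (s |: X) = f X + (if Q X then 0 else 1).
Hypothesis Q_important :
  forall x, x != s -> exists2 X : {set E}, s \notin X & ~~ Q X && Q (x |: X).

Lemma marginal_s Y : s \notin Y -> marginal f s Y = if Q Y then 0 else 1.
Proof. by move=> sY; rewrite /marginal f_setU1s //; case: (Q Y); ring. Qed.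

Lemma marginal_critical_ge1 x Y :
  x != s -> s \notin Y -> ~~ Q Y -> Q (x |: Y) -> 1 <= marginal f x Y.
Proof.
case: pf => _ _ fmono _ xs sY nQY QxY.
have sxY : s \notin x |: Y by rewrite in_setU1 negb_or eq_sym xs.
have : f (s |: Y) <= f (s |: (x |: Y)) by apply/fmono/setUS/subsetU1.
by rewrite /marginal !f_setU1s // QxY (negbTE nQY); lra.
Qed.

Definition min_qualified Z := minset Q Z && (s \notin Z).

Lemma min_qualified_exists W :
  Q W -> s \notin W -> exists2 Z : {set E}, Z \subset W & min_qualified Z.
Proof.
move=> QW sW; have [Z minZ ZW] := minset_exists QW.
by exists Z; rewrite // /min_qualified minZ; apply: contra sW; apply: (subsetP ZW).
Qed.

Section MinQualified.
Variable Z : {set E}.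
Hypothesis Zmin : min_qualified Z.

Lemma min_qualified_Q : Q Z.
Proof. by case/andP: Zmin => /minsetp. Qed.

Lemma min_qualified_s W : W \subset Z -> s \notin W.
Proof. by move=> WZ; case/andP: Zmin => _; apply: contra; apply: (subsetP WZ). Qed.

Lemma min_qualified_proper W : W \proper Z -> ~~ Q W.
Proof.
case/andP: Zmin => /minsetP[_ minZ] _ WZ; apply/negP=> QW.
by move: (WZ); rewrite {1}(minZ W QW (proper_sub WZ)) properxx.
Qed.

Lemma min_qualified_f W : W \subset Z -> f W = #|W|%:R.
Proof.
move=> WZ; apply: f_eq_card => // r rW.
have rZ := subsetP WZ r rW.
have rs : r != s by apply: contraNneq (min_qualified_s (subxx Z)) => <-.
apply: (@le_trans _ _ (marginal f r (Z :\ r))); last first.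
  by apply: marginal_le_subset => //; [exact: setSD | rewrite setD11].
apply: marginal_critical_ge1 => //; first exact/min_qualified_s/subD1set.
  exact/min_qualified_proper/properD1.
by rewrite setD1K // min_qualified_Q.
Qed.

Lemma min_qualified_fs : f (s |: Z) = #|Z|%:R.
Proof.
by rewrite f_setU1s ?min_qualified_s // min_qualified_Q addr0 min_qualified_f.
Qed.

Lemma min_qualified_fs_proper W : W \proper Z -> f (s |: W) = #|W|%:R + 1.
Proof.
move=> WZ; have WZ' := proper_sub WZ.
rewrite f_setU1s ?min_qualified_s // (negbTE (min_qualified_proper WZ)).
by rewrite min_qualified_f.
Qed.

End MinQualified.

Lemma f_setU_min_qualified Z Z' : min_qualified Z -> min_qualified Z' ->
  ~~ (Z \subset Z') -> f (Z :|: Z') <= #|Z :|: Z'|%:R - 1.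
Proof.
case: pf => _ _ fmono fsub Zmin Z'min ZZ'.
have := fsub (s |: Z) (s |: Z').
rewrite setUACA setUid -setUIr (min_qualified_fs Zmin) (min_qualified_fs Z'min).
rewrite (min_qualified_fs_proper Zmin (properIl ZZ')).
have : f (Z :|: Z') <= f (s |: (Z :|: Z')) by apply/fmono/subsetU1.
have := congr1 (fun k => k%:R : R) (cardsUI Z Z'); rewrite /= !natrD.
lra.
Qed.

Section MinimalCounterexample.
Variable n : nat.
Hypothesis small : forall x Y, (#|Y| < n)%N -> x \notin Y ->
  marginal f x Y = 0 \/ marginal f x Y = 1.

Lemma fractional_marginal_swap b c Y : (#|Y| < n)%N -> b \notin Y -> c \notin Y ->
  b != c -> 0 < marginal f c (b |: Y) < 1 ->
  marginal f c Y = 1 /\ marginal f b (c |: Y) = marginal f c (b |: Y).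
Proof.
move=> Yn bY cY bc /andP[frac_gt0 frac_lt1].
have cbY : c \notin b |: Y by rewrite in_setU1 negb_or eq_sym bc.
have bcY : b \notin c |: Y by rewrite in_setU1 negb_or bc.
have := marginal_exchange f b c Y.
have := marginal_le_subset pf (subsetU1 b Y) cbY.
have := marginal_ge0 pf b (c |: Y); have := marginal_le1 pf f1 bcY.
by case: (small Yn bY) => ->; case: (small Yn cY) => ->; split; lra.
Qed.

Section Counterexample.
Variables (V : {set E}) (c : E).
Hypotheses (Vn : #|V| = n.+1) (cV : c \in V).
Hypothesis frac : 0 < marginal f c (V :\ c) < 1.

Lemma card_setD2_lt x y : x \in V -> y \in V -> x != y -> (#|V :\ x :\ y| < n)%N.
Proof.
move=> xV yV xy; have yVx : y \in V :\ x by rewrite in_setD1 eq_sym xy.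
by move: Vn; rewrite (cardsD1 x V) xV (cardsD1 y (V :\ x)) yVx !add1n => -[<-].
Qed.

Lemma marginal_setD1_V b : b \in V -> marginal f b (V :\ b) = marginal f c (V :\ c).
Proof.
move=> bV; have [->|bc] := eqVneq b c; first by [].
have bVc : b \in V :\ c by rewrite in_setD1 bc.
have cVb : c \in V :\ b by rewrite in_setD1 eq_sym bc.
have Vcb : V :\ c :\ b = V :\ b :\ c by rewrite !setDDl setUC.
have [_] : marginal f c (V :\ c :\ b) = 1 /\
    marginal f b (c |: (V :\ c :\ b)) = marginal f c (b |: (V :\ c :\ b)).
  apply: fractional_marginal_swap => //; rewrite ?setD11 ?setD1K ?Vcb ?setD11 //.
  by apply: card_setD2_lt; rewrite // eq_sym.
by rewrite (setD1K bVc) Vcb (setD1K cVb).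
Qed.

Lemma marginal_setD2_V x y : x \in V -> y \in V -> x != y ->
  marginal f x (V :\ x :\ y) = 1.
Proof.
move=> xV yV xy; apply: (proj1 (@fractional_marginal_swap y x _ _ _ _ _ _)).
- exact: card_setD2_lt.
- by rewrite setD11.
- by rewrite !in_setD1 eqxx andbF.
- by rewrite eq_sym.
by rewrite setD1K ?in_setD1 1?eq_sym ?xy // marginal_setD1_V.
Qed.

Lemma f_proper_V W : W \proper V -> f W = #|W|%:R.
Proof.
case/properP=> WV [y yV yW]; apply: f_eq_card => // r rW.
have rV := subsetP WV r rW.
have ry : r != y by apply: (contraNneq _ yW) => <-.
rewrite -(marginal_setD2_V rV yV ry); apply: marginal_le_subset => //.
  apply/subsetP=> z; rewrite !in_setD1 => /andP[zr zW].
  have zy : z != y by apply: (contraNneq _ yW) => <-.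
  by rewrite zy zr (subsetP WV).
by rewrite !in_setD1 eqxx andbF.
Qed.

Lemma f_V : f V = #|V|%:R - 1 + marginal f c (V :\ c).
Proof.
rewrite /marginal setD1K // (f_proper_V (properD1 cV)).
by rewrite [in RHS](cardsD1 c V) cV add1n -natr1; ring.
Qed.

Lemma f_subset_V W : W \subset V -> #|W|%:R - 1 < f W.
Proof.
move=> WV; case/andP: frac => frac_gt0 _.
have [->|WnV] := eqVneq W V; first by rewrite f_V; lra.
by rewrite f_proper_V ?properEneq ?WnV //; lra.
Qed.

Lemma s_notin_V : s \notin V.
Proof.
apply/negP=> sV; case/andP: frac; rewrite -(marginal_setD1_V sV) marginal_s ?setD11 //.
by case: Q; lra.
Qed.

Lemma exists_min_qualified_meet : exists2 Z, min_qualified Z & Z :&: V != set0.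
Proof.
have cs : c != s by apply: contraNneq s_notin_V => <-.
have [X sX /andP[nQX QcX]] := Q_important cs.
have [|Z ZcX Zmin] := min_qualified_exists QcX.
  by rewrite in_setU1 negb_or eq_sym cs.
exists Z => //; apply/set0Pn; exists c; rewrite in_setI cV andbT.
apply: contraNT nQX => cZ; apply: Q_up (min_qualified_Q Zmin).
apply/subsetP=> z zZ; move: (subsetP ZcX z zZ); rewrite in_setU1.
by case/orP=> // /eqP zc; move: cZ; rewrite -zc zZ.
Qed.

Section LeastExcess.
Variable Z : {set E}.
Hypotheses (Zmin : min_qualified Z) (ZV : Z :&: V != set0).
Hypothesis Z_least : forall Z', min_qualified Z' -> Z' :&: V != set0 ->
  (#|Z :\: V| <= #|Z' :\: V|)%N.

Lemma s_notin_setUD1 x : s \notin (Z :|: V) :\ x.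
Proof.
by rewrite !inE negb_and negb_or s_notin_V (min_qualified_s Zmin (subxx Z)) orbT.
Qed.

Lemma Q_setU_V : Q (Z :|: V).
Proof. exact: Q_up (subsetUl Z V) (min_qualified_Q Zmin). Qed.

Lemma setD_excess x Z' : Z' \subset (Z :|: V) :\ x -> Z' :\: V \subset (Z :\: V) :\ x.
Proof.
move=> Z'sub; apply/subsetP=> y; rewrite in_setD => /andP[yV /(subsetP Z'sub)].
by rewrite !inE (negbTE yV) orbF.
Qed.

Lemma min_qualified_setD1_meet x Z' : x \in Z -> min_qualified Z' ->
  Z' \subset (Z :|: V) :\ x -> Z' :&: V != set0.
Proof.
move=> xZ Z'min Z'sub; apply/negP=> /eqP Z'V0.
suff : Q (Z :\ x) by apply/negP/(min_qualified_proper Zmin)/properD1.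
apply: Q_up (min_qualified_Q Z'min); apply/subsetP=> y yZ'.
have yV : y \notin V.
  by apply/negP=> yV; move/setP: Z'V0 => /(_ y); rewrite in_setI yZ' yV inE.
by move: (subsetP Z'sub y yZ'); rewrite !inE (negbTE yV) orbF.
Qed.

Lemma not_Q_drop_excess r : r \in Z :\: V -> ~~ Q ((Z :|: V) :\ r).
Proof.
move=> rZV; apply/negP=> Qr.
have rZ : r \in Z by move: rZV; rewrite in_setD => /andP[].
have [Z' Z'sub Z'min] := min_qualified_exists Qr (s_notin_setUD1 r).
have := Z_least Z'min (min_qualified_setD1_meet rZ Z'min Z'sub).
have := subset_leq_card (setD_excess Z'sub).
rewrite [in X in _ -> X](cardsD1 r) rZV add1n => le lt.
by have := leq_trans lt le; rewrite ltnn.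
Qed.

Lemma f_setU_excess L : L \subset V -> f (L :|: Z :\: V) = f L + #|Z :\: V|%:R.
Proof.
move=> LV; apply: f_setU_unit_marginals => //.
  by apply: disjointWl LV _; rewrite disjoint_sym disjoints_subset setDE subsetIr.
move=> r rZV; have rZ : r \in Z by move: rZV; rewrite in_setD => /andP[].
have rs : r != s by apply: contraTneq rZ => ->; exact: (min_qualified_s Zmin (subxx Z)).
apply: (@le_trans _ _ (marginal f r ((Z :|: V) :\ r))).
  apply: marginal_critical_ge1 => //; first exact: s_notin_setUD1.
    exact: not_Q_drop_excess.
  by rewrite setD1K ?in_setU ?rZ // Q_setU_V.
apply: marginal_le_subset => //; last by rewrite setD11.
by apply: setSD; rewrite setUC; apply: setUSS (subsetDl _ _) LV.
Qed.

Lemma Q_drop_core v : v \in Z :&: V -> Q ((Z :|: V) :\ v).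
Proof.
case/setIP=> vZ vV; apply: contraT => nQ.
have vs : v != s by apply: contraTneq vV => ->; apply: s_notin_V.
have := marginal_critical_ge1 vs (s_notin_setUD1 v) nQ.
rewrite setD1K ?in_setU ?vZ // => /(_ Q_setU_V) ge1.
have : marginal f v ((Z :|: V) :\ v) <= marginal f v (V :\ v).
  by apply: marginal_le_subset => //; [exact/setSD/subsetUr | rewrite setD11].
by rewrite (marginal_setD1_V vV); case/andP: frac; lra.
Qed.

Lemma least_excess_absurd : False.
Proof.
have /set0Pn[v vZV] := ZV; have /setIP[vZ vV] := vZV.
have [Z2 Z2sub Z2min] := min_qualified_exists (Q_drop_core vZV) (s_notin_setUD1 v).
have Z2V : Z2 :\: V = Z :\: V.
  apply/eqP; rewrite eqEcard Z_least ?(min_qualified_setD1_meet vZ) // andbT.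
  exact: subset_trans (setD_excess Z2sub) (subD1set _ _).
have ZZ2 : ~~ (Z \subset Z2).
  by apply/negP=> /subsetP/(_ v vZ)/(subsetP Z2sub); rewrite setD11.
have exE : (Z :|: Z2) :\: V = Z :\: V by rewrite setDUl Z2V setUid.
have fE : f (Z :|: Z2) = f ((Z :|: Z2) :&: V) + #|Z :\: V|%:R.
  by rewrite -f_setU_excess ?subsetIr // -exE setID.
have cardE : #|Z :|: Z2|%:R = #|(Z :|: Z2) :&: V|%:R + #|Z :\: V|%:R :> R.
  by rewrite -natrD -exE cardsID.
have := f_setU_min_qualified Zmin Z2min ZZ2.
have := f_subset_V (subsetIr (Z :|: Z2) V).
by rewrite fE cardE; lra.
Qed.

End LeastExcess.

Lemma counterexample_absurd : False.
Proof.
have [Z0 Z0min Z0V] := exists_min_qualified_meet.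
pose meets Z := min_qualified Z && (Z :&: V != set0).
have meetsZ0 : meets Z0 by apply/andP.
case: (@arg_minnP _ Z0 meets (fun Z => #|Z :\: V|) meetsZ0) => Z /andP[Zmin ZV] Z_least.
apply: (least_excess_absurd Zmin ZV) => Z' Z'min Z'V.
by apply: Z_least; apply/andP.
Qed.

End Counterexample.
End MinimalCounterexample.

Theorem marginal_zero_one : zero_one_marginals f.
Proof.
move=> x Y; have [n] := ubnP #|Y|; elim: n x Y => // n IH x Y.
rewrite ltnS leq_eqVlt => /orP[/eqP Yn xY|]; last exact: IH.
have [|m0] := eqVneq (marginal f x Y) 0; first by left.
have [|m1] := eqVneq (marginal f x Y) 1; first by right.
exfalso; apply: (@counterexample_absurd n IH (x |: Y) x).
- by rewrite cardsU1 xY Yn.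
- exact: setU11.
rewrite setU1K // !lt_neqAle eq_sym m0 m1 marginal_ge0 //.
exact: marginal_le1.
Qed.

End Realization.

Lemma polymatroid_midpoint (R : realFieldType) (E : finType) (f g : {set E} -> R) :
  polymatroid f -> polymatroid g -> polymatroid (fun X => (f X + g X) / 2).
Proof.
case=> f0 f_ge0 fmono fsub [g0 g_ge0 gmono gsub].
split=> [|X|X Y XY|X Y]; first by rewrite f0 g0 addr0 mul0r.
- by have := f_ge0 X; have := g_ge0 X; lra.
- by have := fmono X Y XY; have := gmono X Y XY; lra.
by have := fsub X Y; have := gsub X Y; lra.
Qed.

Lemma eq_zero_one_marginals (R : realFieldType) (E : finType) (f g : {set E} -> R) :
  f set0 = g set0 -> zero_one_marginals f -> zero_one_marginals g ->
  zero_one_marginals (fun X => (f X + g X) / 2) -> f =1 g.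
Proof.
move=> fg0 f01 g01 h01; elim/set_ind => // x X xX fgX.
move: (f01 x X xX) (g01 x X xX) (h01 x X xX); rewrite /marginal fgX.
by do 3 case=> ?; lra.
Qed.

Section AccessStructure.
Variables (P : finType) (A : {set {set P}}).
Implicit Types (X Y : {set option P}).

Definition qualified X := Some @^-1: X \in A.

Lemma preimset_liftP (X : {set P}) : Some @^-1: liftP X = X.
Proof. by apply/setP=> a; rewrite inE mem_imset //; exact: Some_inj. Qed.

Lemma liftP_preimset X : None \notin X -> liftP (Some @^-1: X) = X.
Proof.
move=> NX; apply/setP=> -[a|]; last by rewrite (negbTE NX); apply/imsetP=> -[].
by rewrite mem_imset ?inE //; exact: Some_inj.
Qed.

Lemma qualified_up : access_structure A ->
  forall X Y, X \subset Y -> qualified X -> qualified Y.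
Proof. by case=> _ up _ X Y XY QX; apply: up QX _; apply: preimsetS. Qed.

Lemma qualified_important : connected_as A ->
  forall x : option P, x != None ->
  exists2 X : {set option P}, None \notin X & ~~ qualified X && qualified (x |: X).
Proof.
move=> con [a|] // _; have [X [XA aXA]] := con a.
exists (liftP X); first by apply/imsetP=> -[].
by rewrite /qualified -imsetU1 !preimset_liftP XA.
Qed.

Lemma realizes_setU1None (R : realFieldType) (f : {set option P} -> R) :
  realizes f A -> f [set None] = 1 ->
  forall X, None \notin X -> f (None |: X) = f X + (if qualified X then 0 else 1).
Proof.
move=> rf fN X NX; have [[inA _] [notinA _]] := rf (Some @^-1: X).
rewrite /withs liftP_preimset // in inA notinA.
by rewrite /qualified; case: ifP => [/inA ->|/negbT/notinA ->]; rewrite ?addr0 ?fN.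
Qed.

End AccessStructure.

Theorem theorem3p4 (R : realFieldType) (P : finType) (A : {set {set P}})
    (f : {set option P} -> R) :
  access_structure A -> connected_as A ->
  polymatroid f -> realizes f A ->
  (forall a : P, f [set Some a] = 1) -> f [set None] = 1 ->
  matroid f /\
  (forall g : {set option P} -> R,
      polymatroid g -> realizes g A ->
      (forall a : P, g [set Some a] = 1) -> g [set None] = 1 ->
      g = f).
Proof.
move=> acc con pf rf fa fN.
have Q_up := qualified_up acc; have Q_important := qualified_important con.
have f1 : forall x, f [set x] = 1 by case.
have f0 : f set0 = 0 by case: pf.
have f01 := marginal_zero_one pf f1 Q_up (realizes_setU1None rf fN) Q_important.
split.
  split=> // [X|x]; last by right.
  have [n ->] := zero_one_marginals_nat f0 f01 X.
  by exists n; rewrite pmulrn.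
move=> g pg rg ga gN; have g1 : forall x, g [set x] = 1 by case.
have g01 := marginal_zero_one pg g1 Q_up (realizes_setU1None rg gN) Q_important.
have h01 : zero_one_marginals (fun X => (g X + f X) / 2).
  apply: marginal_zero_one Q_up _ Q_important; first exact: polymatroid_midpoint.
    by move=> x; rewrite g1 f1; lra.
  move=> X NX; rewrite (realizes_setU1None rg) ?(realizes_setU1None rf) //.
  by case: qualified; lra.
apply: functional_extensionality; apply: eq_zero_one_marginals => //.
by rewrite f0; case: pg.
Qed.
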